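(* Let $(X,\tau)$ be a topological space and $\mathcal{F}:\mathcal{O}(X)^{\mathrm{op}}\to\mathbf{Set}$ a presheaf. Then: (1) $B^1_{\mathcal{F}}$ is a base of compact open sets for $(\Lambda^1_{\mathcal{F}},\tau^1_{\mathcal{F}})$; hence $(\Lambda^1_{\mathcal{F}},\tau^1_{\mathcal{F}})$ is locally compact; (2) for every $G\in\mathrm{St}(\mathrm{RO}(X))$ the stalk $\mathcal{F}_G$ is a discrete and closed subspace of $\Lambda^1_{\mathcal{F}}$; (3) $p^1_{\mathcal{F}}:\Lambda^1_{\mathcal{F}}\to\mathrm{St}(\mathrm{RO}(X))$ is continuous, and for every $U\in\mathcal{O}(X)$ and $f\in\mathcal{F}(U)$, $\dot f$ is a local section of $p^1_{\mathcal{F}}$ over $N_{\mathrm{Reg}(U)}$; hence $\Lambda^1_{\mathcal{F}}$ is an étalé space over $\mathrm{St}(\mathrm{RO}(X))$; (4) $\Lambda^1_{\mathcal{F}}$ is Hausdorff and zero-dimensional, in particular Tychonoff; (5) if $\Lambda^1_{\mathcal{F}}$ has an infinite stalk, then it is non-compact.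
   Context: $\mathcal{O}(X)$ is the set of non-empty open subsets of $X$ ordered by inclusion; for $f\in\mathcal{F}(V)$ and $U\subseteq V$ write $f\restriction U=\mathcal{F}(U\subseteq V)(f)$. $\mathrm{Reg}(U)=\mathrm{Int}\,\mathrm{Cl}\,U$; $\mathrm{RO}(X)$ is the complete boolean algebra of regular open sets; $\mathrm{St}(\mathrm{RO}(X))$ is its Stone space of ultrafilters with clopen sets $N_q=\{G:q\in G\}$, $q\in\mathrm{RO}(X)$. For an ultrafilter $G$ on $\mathrm{RO}(X)$ let $\bar G=\{U\in\mathcal{O}(X):\mathrm{Reg}(U)\in G\}$. For $f\in\mathcal{F}(U_f)$, $g\in\mathcal{F}(U_g)$ with $U_f,U_g\in\bar G$, set $f\equiv_G g$ iff there is $U\in\bar G$ with $U\subseteq U_f\cap U_g$ such that $D_{f,g}=\{V\in\mathcal{O}(X):V\subseteq U_f\cap U_g,\ f\restriction V=g\restriction V\}$ is dense below $U$ (every non-empty open $W\subseteq U$ contains some element of $D_{f,g}$). Let $[f]_G$ be the class of $f$, $\mathcal{F}_G=\{[f]_G:f\in\mathcal{F}(U_f),U_f\in\bar G\}$ (the stalk over $G$), $\Lambda^1_{\mathcal{F}}=\coprod_{G\in\mathrm{St}(\mathrm{RO}(X))}\mathcal{F}_G$ and $p^1_{\mathcal{F}}([f]_G)=G$. For $f\in\mathcal{F}(U)$, $\dot f:N_{\mathrm{Reg}(U)}\to\Lambda^1_{\mathcal{F}}$ is $G\mapsto[f]_G$. $\tau^1_{\mathcal{F}}$ is the topology generated by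 $B^1_{\mathcal{F}}=\{\dot f[N_q]: q\in\mathrm{RO}(X),\ q\subseteq\mathrm{Reg}(U),\ f\in\mathcal{F}(U),\ U\in\mathcal{O}(X)\}$. A local section of a continuous $p:E\to Z$ over an open $V\subseteq Z$ is a continuous $s:V\to E$ with $p\circ s=\mathrm{id}_V$; $p$ is an étalé space if every $e\in E$ has an open neighbourhood $O$ with $p[O]$ open and $p\restriction O:O\to p[O]$ a homeomorphism. *)

From HB Require Import structures.
From mathcomp Require Import all_boot all_order all_algebra.
From mathcomp Require Import all_classical all_reals all_analysis.
From mathcomp Require Import Rstruct Rstruct_topology.
Set Implicit Arguments. Unset Strict Implicit. Unset Printing Implicit Defensive.
Import Order.TTheory GRing.Theory Num.Theory.
Local Open Scope classical_set_scope.

Definition is_base (T : topologicalType) (B : set (set T)) :=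
  (forall A, B A -> open A) /\
  (forall O : set T, open O -> forall x, O x -> exists A, [/\ B A, A x & A `<=` O]).

Definition zero_dim (T : topologicalType) :=
  exists B : set (set T), is_base B /\ forall A, B A -> clopen A.

Definition tychonoff_space (T : topologicalType) :=
  accessible_space T /\
  forall (a : T) (B : set T), closed B -> ~ B a ->
    exists f : T -> Rdefinitions.R,
      [/\ continuous f, f a = 0%R & forall b, B b -> f b = 1%R].

Definition local_section (E Z : topologicalType) (p : E -> Z) (V : set Z)
  (s : Z -> E) :=
  [/\ open V, {within V, continuous s} & forall z, V z -> p (s z) = z].

Definition homeo_onto_image (E Z : topologicalType) (p : E -> Z) (O : set E) :=
  {within O, continuous p} /\
  exists g : Z -> E,
    [/\ forall z, (p @` O) z -> O (g z) /\ p (g z) = z,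
        forall e, O e -> g (p e) = e &
        {within p @` O, continuous g}].

Definition etale_space (E Z : topologicalType) (p : E -> Z) :=
  forall e : E, exists O : set E,
    [/\ open O, O e, open (p @` O) & homeo_onto_image p O].

Section RO.
Context {X : topologicalType}.

Definition Reg (U : set X) : set X := interior (closure U).

Definition regular_open (q : set X) := Reg q = q.

Definition Oset (U : set X) := open U /\ U !=set0.

(* filters / ultrafilters on the boolean algebra RO(X)
   (order = inclusion, meet = intersection, top = X, bottom = empty) *)
Definition ro_filter (G : set (set X)) :=
  [/\ G `<=` regular_open, G setT,
      forall p q, G p -> G q -> G (p `&` q) &
      forall p q, G p -> regular_open q -> p `<=` q -> G q].

Definition ro_proper_filter (G : set (set X)) := ro_filter G /\ ~ G set0.

Definition ro_ultrafilter (G : set (set X)) :=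
  ro_proper_filter G /\
  forall H, ro_proper_filter H -> G `<=` H -> H = G.

End RO.

Definition St (X : topologicalType) := {G : set (set X) | ro_ultrafilter G}.

HB.instance Definition _ (X : topologicalType) := gen_eqMixin (St X).
HB.instance Definition _ (X : topologicalType) := gen_choiceMixin (St X).

Definition Nq (X : topologicalType) (q : set X) : set (St X) :=
  [set G | proj1_sig G q].

Definition St_subbase (X : topologicalType) : set (set (St X)) :=
  [set A | exists q : set X, regular_open q /\ A = Nq q].

HB.instance Definition _ (X : topologicalType) :=
  @isSubBaseTopological.Build (St X) (set (St X)) (@St_subbase X) id.

Record presheaf (X : topologicalType) := Presheaf {
  sec : set X -> Type;
  res : forall U V : set X, V `<=` U -> sec U -> sec V;
  res_id : forall U (h : U `<=` U) (s : sec U), Oset U -> res h s = s;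
  res_comp : forall U V W (hVU : V `<=` U) (hWV : W `<=` V) (hWU : W `<=` U)
      (s : sec U), Oset U -> Oset V -> Oset W ->
      res hWV (res hVU s) = res hWU s
}.

Unset Implicit Arguments.
Section Etale.
Context {X : topologicalType} (F : presheaf X).

Record Sec := MkSec {
  sdom : set X;
  sdom_O : Oset sdom;
  sect : sec F sdom
}.

Definition agree_on (f g : Sec) (V : set X) :=
  exists (hf : V `<=` sdom f) (hg : V `<=` sdom g),
    res hf (sect f) = res hg (sect g).

Definition Gbar (G : St X) (U : set X) := Oset U /\ proj1_sig G (Reg U).

Definition equivG (G : St X) (f g : Sec) :=
  [/\ Gbar G (sdom f), Gbar G (sdom g) &
   exists U, [/\ Gbar G U, U `<=` sdom f `&` sdom g &
     forall W, Oset W -> W `<=` U ->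
       exists V, [/\ Oset V, V `<=` W, V `<=` sdom f `&` sdom g &
                     agree_on f g V]]].

Definition germ (G : St X) (f : Sec) : set Sec := [set g | equivG G f g].

(* Λ^1_F = coproduct of the stalks: pairs (G, [f]_G) *)
Definition Lambda :=
  {e : St X * set Sec | exists f, Gbar e.1 (sdom f) /\ e.2 = germ e.1 f}.

HB.instance Definition _ := gen_eqMixin Lambda.
HB.instance Definition _ := gen_choiceMixin Lambda.

Definition p1 (e : Lambda) : St X := (proj1_sig e).1.

Definition stalk (G : St X) : set Lambda := [set e | p1 e = G].

Definition dot_image (f : Sec) (q : set X) : set Lambda :=
  [set e | Nq q (p1 e) /\ (proj1_sig e).2 = germ (p1 e) f].

Definition B1 : set (set Lambda) :=
  [set A | exists (f : Sec) (q : set X),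
     [/\ regular_open q, q `<=` Reg (sdom f) & A = dot_image f q]].

End Etale.
Set Implicit Arguments.

HB.instance Definition _ (X : topologicalType) (F : presheaf X) :=
  @isSubBaseTopological.Build (Lambda F) (set (Lambda F)) (B1 F) id.

(* Two sections f and g have the same germ at an ultrafilter G of RO(X) iff
   G contains Reg of the open set on which they agree.  As an ultrafilter
   contains either q or its complement Int (X \ q), both this relation and its
   failure persist on a basic clopen neighbourhood N_r of G in the Stone space.
   Hence the sections f-dot are continuous, each basic set f-dot[N_q] is the
   continuous image of the compact set N_q, is a neighbourhood of each of its
   points and has open complement: B^1 is a base of compact clopen sets, from
   which continuity of p, the etale property and the separation axioms follow.
   An infinite stalk is an infinite closed discrete set, impossible in a
   compact space. *)

From HB Require Import structures.
From mathcomp Require Import all_boot all_order all_algebra.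
From mathcomp Require Import all_classical all_reals all_analysis.
From mathcomp Require Import Rstruct Rstruct_topology.
Local Open Scope classical_set_scope.
Set Implicit Arguments. Unset Strict Implicit.

Section subbase_topology.
Context {T : topologicalType} (D : set (set T)).
Hypothesis openE : forall A : set T,
  open A <-> exists2 D', D' `<=` finI_from D id & \bigcup_(i in D') i = A.
Hypothesis subbase_cover : forall x, exists B, D B /\ B x.
Hypothesis subbase_refine : forall x B1 B2, D B1 -> D B2 -> B1 x -> B2 x ->
  exists B, [/\ D B, B x & B `<=` B1 `&` B2].

Lemma subbase_open A : D A -> open A.
Proof.
move=> DA; apply/openE; exists [set A]; last by rewrite bigcup_set1.
by move=> _ ->; apply: finI_from1.
Qed.

Lemma finI_from_refine x A : finI_from D id A -> A x ->
  exists B, [/\ D B, B x & B `<=` A].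
Proof.
case=> D' D'D <- Ax.
suff /(_ (finmap.enum_fset D') (fun i => id)) [B [DB Bx BD']] :
    forall s : seq (set T), {subset s <= finmap.enum_fset D'} ->
    exists B, [/\ D B, B x & forall i, i \in s -> B `<=` i].
  by exists B; split => // y By i D'i; exact: BD'.
elim=> [|a s IH] sD'.
  by have [B [DB Bx]] := subbase_cover x; exists B.
have [B [DB Bx Bs]] : exists B, [/\ D B, B x & forall i, i \in s -> B `<=` i].
  by apply: IH => i si; apply: sD'; rewrite inE si orbT.
have D'a := sD' a (mem_head a s).
have [C [DC Cx CaB]] := subbase_refine (set_mem (D'D a D'a)) DB (Ax a D'a) Bx.
exists C; split => // i /predU1P [->|/Bs iB] y /CaB [ay By] //; exact: iB.
Qed.

Lemma nbhs_subbase x A : nbhs x A -> exists B, [/\ D B, B x & B `<=` A].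
Proof.
rewrite nbhsE => -[V [/openE [D' D'f <-] [i D'i ix]] VA].
have [B [DB Bx Bi]] := finI_from_refine (D'f _ D'i) ix.
by exists B; split => // y /Bi iy; apply: VA; exists i.
Qed.

End subbase_topology.

Section separation_and_compactness.
Context {T : topologicalType}.

Lemma zero_dimensional_hausdorff : zero_dimensional T -> hausdorff_space T.
Proof.
move=> zdT x y cl; apply: contrapT => /eqP xy.
have [U [[oU cU] Ux nUy]] := zdT _ _ xy.
have oCU : open (~` U) by exact: closed_openC.
have [z [Uz nUz]] := cl U (~` U) (open_nbhs_nbhs (conj oU Ux))
  (open_nbhs_nbhs (conj oCU nUy)).
exact: nUz Uz.
Qed.

Lemma zero_dimensional_accessible : zero_dimensional T -> accessible_space T.
Proof.
move=> zdT x y xy; have [U [[oU _] Ux nUy]] := zdT _ _ xy.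
by exists U; split => //; rewrite in_setE.
Qed.

Lemma clopen_indicator_continuous (U : topologicalType) (A : set T) (a b : U) :
  clopen A -> continuous (fun x => if `[< A x >] then a else b).
Proof.
move=> [oA cA] x; have [Ax|nAx] := pselect (A x).
  apply: (near_cst_continuous a); apply: filterS (open_nbhs_nbhs (conj oA Ax)).
  by move=> y Ay; rewrite asboolT.
have oCA : open (~` A) by exact: closed_openC.
apply: (near_cst_continuous b); apply: filterS (open_nbhs_nbhs (conj oCA nAx)).
by move=> y nAy; rewrite asboolF.
Qed.

Lemma zero_dim_tychonoff :
  accessible_space T -> zero_dim T -> tychonoff_space T.
Proof.
move=> T1 [B [[_ Bnbhs] Bclopen]]; split => // a C cC nCa.
have [A [BA Aa AC]] := Bnbhs _ (closed_openC cC) a nCa.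
exists (fun x => if `[< A x >] then 0%R else 1%R); split.
- exact: clopen_indicator_continuous (Bclopen _ BA).
- by rewrite asboolT.
- by move=> c Cc; rewrite asboolF // => /AC.
Qed.

Lemma compact_base_locally_compact (B : set (set T)) :
  is_base B -> (forall A, B A -> compact A /\ closed A) ->
  locally_compact [set: T].
Proof.
move=> [Bopen Bnbhs] Bcpt x _.
have [A [BA Ax _]] := Bnbhs _ openT x I.
exists A; last exact: Bcpt.
by apply: filterS (open_nbhs_nbhs (conj (Bopen _ BA) Ax)).
Qed.

Lemma compact_closed_discrete_finite (S : set T) :
  compact [set: T] -> closed S ->
  (forall e, S e -> exists O, open O /\ O `&` S = [set e]) -> finite_set S.
Proof.
move=> cpt cS discS; apply: contrapT => infS.
(* A cluster point of the filter of sets cofinite in S can lie neither in S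
   (S is discrete) nor outside S (S is closed). *)
pose cofin := [set P : set T | finite_set (S `\` P)].
have cofin_filter : ProperFilter cofin.
  apply: Build_ProperFilter; first by rewrite /cofin /= setD0.
  split; first by rewrite /cofin /= setDT.
    by move=> P Q fP fQ; rewrite /cofin /= setDIr finite_setU.
  move=> P Q PQ fP; apply: sub_finite_set fP.
  by move=> x [Sx nQx]; split => // /PQ.
have [z [_ clz]] := cpt cofin cofin_filter filterT.
have [Sz|nSz] := pselect (S z).
  have [V [oV VS]] := discS z Sz.
  have Vz : V z by have : [set z] z by []; rewrite -VS => -[].
  have cofin_Sz : cofin (S `\` [set z]).
    apply: sub_finite_set (finite_set1 z) => x [Sx nSzx].
    by apply: contrapT => xz; exact: nSzx.
  have [y [[Sy yz] Vy]] := clz _ _ cofin_Sz (open_nbhs_nbhs (conj oV Vz)).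
  by apply: yz; rewrite -VS.
have cofin_S : cofin S by rewrite /cofin /= setDv.
have [y [Sy nSy]] :=
  clz _ _ cofin_S (open_nbhs_nbhs (conj (closed_openC cS) nSz)).
exact: nSy Sy.
Qed.

End separation_and_compactness.

Section regular_open_sets.
Context {X : topologicalType}.
Implicit Types U V p q : set X.

Lemma regular_open_Reg U : regular_open (Reg U).
Proof. exact: interior_closure_idem. Qed.

Lemma regular_open_open q : regular_open q -> open q.
Proof. by move=> <-; exact: open_interior. Qed.

Lemma open_subset_Reg U : open U -> U `<=` Reg U.
Proof. by move=> oU; rewrite /Reg -open_subsetE //; exact: subset_closure. Qed.

Lemma closure_closure U : closure (closure U) = closure U.
Proof. exact/esym/closure_id/closed_closure. Qed.

Lemma Reg_closureS U V : U `<=` closure V -> Reg U `<=` Reg V.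
Proof.
move=> UV; apply: interiorS.
by rewrite -[X in _ `<=` X]closure_closure; exact: closureS.
Qed.

Lemma RegS U V : U `<=` V -> Reg U `<=` Reg V.
Proof. by move=> UV; apply: Reg_closureS => x /UV; exact: subset_closure. Qed.

Lemma regular_openT : regular_open (@setT X).
Proof. by rewrite /regular_open /Reg closureT interiorT. Qed.

Lemma open_closureI U V : open U -> U `&` closure V `<=` closure (U `&` V).
Proof.
move=> oU x [Ux clVx] N Nx.
have [y [Vy [Ny Uy]]] := clVx _ (filterI Nx (open_nbhs_nbhs (conj oU Ux))).
by exists y.
Qed.

Lemma RegI U V : open U -> open V -> Reg U `&` Reg V `<=` Reg (U `&` V).
Proof.
move=> oU oV; set W := Reg U `&` Reg V.
have oW : open W by apply: openI; exact: open_interior.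
rewrite /Reg -open_subsetE // => x Wx.
have WU : W `&` U `<=` closure (U `&` V).
  by move=> y [[_ /interior_subset clVy] Uy]; exact: open_closureI.
have clWUx : closure (W `&` U) x.
  by apply: open_closureI => //; split => //; exact: interior_subset Wx.1.
by rewrite -closure_closure; apply: (closureS WU).
Qed.

Lemma regular_openI p q :
  regular_open p -> regular_open q -> regular_open (p `&` q).
Proof.
move=> rp rq; rewrite /regular_open eqEsubset; split.
  by move=> x Hx; rewrite -rp -rq; split; apply: RegS Hx => y [].
rewrite -{1}rp -{1}rq; apply: RegI; exact: regular_open_open.
Qed.

Definition ro_neg p := interior (~` p).

Lemma regular_open_neg p : open p -> regular_open (ro_neg p).
Proof. by move=> op; apply: interior_closed_regopen; exact: open_closedC. Qed.

Lemma ro_negI p : p `&` ro_neg p = set0.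
Proof. by rewrite -subset0 => x [px /interior_subset]. Qed.

Lemma open_subset_ro_neg p q : open q -> q `&` p = set0 -> q `<=` ro_neg p.
Proof.
move=> oq qp; rewrite /ro_neg -open_subsetE // => x qx px.
by have : (q `&` p) x by []; rewrite qp.
Qed.

End regular_open_sets.

Section ro_ultrafilter_theory.
Context {X : topologicalType} (G : set (set X)).
Hypothesis uG : ro_ultrafilter G.
Implicit Types p q : set X.

Lemma ro_uf_regular p : G p -> regular_open p.
Proof. by case: uG => [[[+ _ _ _] _] _]; apply. Qed.

Lemma ro_ufT : G setT.
Proof. by case: uG => [[[_ + _ _] _] _]. Qed.

Lemma ro_ufS p q : G p -> regular_open q -> p `<=` q -> G q.
Proof. by case: uG => [[[_ _ _ +] _] _]; apply. Qed.

Lemma ro_ufIP p q : regular_open p -> regular_open q ->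
  G (p `&` q) <-> G p /\ G q.
Proof.
move=> rp rq; split; last by case: uG => [[[_ _ GI _] _] _] [Gp Gq]; exact: GI.
by move=> Gpq; split; apply: ro_ufS Gpq _ _ => // x [].
Qed.

Lemma ro_uf_neq0 : ~ G set0.
Proof. by case: uG => [[_ +] _]. Qed.

Lemma ro_uf_nonempty p : G p -> p !=set0.
Proof.
move=> Gp; apply/set0P/negP => /eqP p0.
by apply: ro_uf_neq0; rewrite -p0.
Qed.

Lemma ro_uf_negN p : G p -> ~ G (ro_neg p).
Proof.
move=> Gp Gnp; apply: ro_uf_neq0; rewrite -(ro_negI p).
by apply/ro_ufIP; [exact: ro_uf_regular Gp|exact: ro_uf_regular Gnp|].
Qed.

(* If G contained no q disjoint from p, then G and p generate a proper
   filter, which by maximality is G itself. *)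
Lemma ro_uf_neg p : regular_open p -> G p \/ G (ro_neg p).
Proof.
move=> rp.
have [[q [Gq qp]]|noq] := pselect (exists q, G q /\ q `&` p = set0).
  right; apply: (ro_ufS Gq (regular_open_neg (regular_open_open rp))).
  apply: open_subset_ro_neg => //.
  by apply: regular_open_open; exact: ro_uf_regular Gq.
left; pose H := [set r | regular_open r /\ exists2 q, G q & q `&` p `<=` r].
have pH : ro_proper_filter H.
  split; first split.
  - by move=> r [].
  - by split; [exact: regular_openT|exists setT => //; exact: ro_ufT].
  - move=> r s [rr [q Gq qr]] [rs [q' Gq' q's]].
    split; first exact: regular_openI.
    exists (q `&` q').
      by apply/ro_ufIP; [exact: ro_uf_regular Gq|exact: ro_uf_regular Gq'|].
    by move=> x [[qx q'x] px]; split; [apply: qr|apply: q's].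
  - move=> r s [rr [q Gq qr]] rs rsub; split => //.
    by exists q => //; apply: subset_trans rsub.
  - by move=> [_ [q Gq qp]]; apply: noq; exists q; rewrite -subset0.
have GH : G `<=` H.
  by move=> q Gq; split; [exact: ro_uf_regular Gq|exists q => // x []].
have [_ Gmax] := uG; rewrite -(Gmax H pH GH).
by split => //; exists setT; [exact: ro_ufT|move=> x []].
Qed.

End ro_ultrafilter_theory.

Lemma ro_uf_separate {X : topologicalType} (G H : set (set X)) :
  ro_ultrafilter G -> ro_ultrafilter H -> G <> H -> exists p, G p /\ ~ H p.
Proof.
move=> uG [pH _] GH; apply: contrapT => noq; apply: GH.
have [_ Gmax] := uG; apply/esym/Gmax => // p Gp.
by apply: contrapT => Hp; apply: noq; exists p.
Qed.

Lemma ro_proper_filter_bigcup {X : topologicalType} (C : set (set (set X))) :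
  C !=set0 -> C `<=` ro_proper_filter -> total_on C subset ->
  ro_proper_filter (\bigcup_(H in C) H).
Proof.
move=> [H0 CH0] Cpf Ctot.
have in2 p q : (\bigcup_(H in C) H) p -> (\bigcup_(H in C) H) q ->
    exists2 H, C H & H p /\ H q.
  move=> [H1 CH1 H1p] [H2 CH2 H2q]; have [H12|H21] := Ctot _ _ CH1 CH2.
  - by exists H2 => //; split => //; exact: H12.
  - by exists H1 => //; split => //; exact: H21.
split; first split.
- by move=> p [H /Cpf [[Hreg _ _ _] _] /Hreg].
- by exists H0 => //; have [[]] := Cpf _ CH0.
- move=> p q Up Uq; have [H CH [Hp Hq]] := in2 _ _ Up Uq.
  by exists H => //; have [[_ _ HI _] _] := Cpf _ CH; exact: HI.
- move=> p q [H CH Hp] rq pq; exists H => //.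
  by have [[_ _ _ HS] _] := Cpf _ CH; exact: HS Hp rq pq.
- by move=> [H /Cpf [_]].
Qed.

Lemma ro_ultrafilter_extend {X : topologicalType} (G0 : set (set X)) :
  ro_proper_filter G0 -> exists2 G, ro_ultrafilter G & G0 `<=` G.
Proof.
move=> pG0; pose T := {H : set (set X) | ro_proper_filter H /\ G0 `<=` H}.
have [||||M Mmax] := @Zorn T (fun A B => `[< sval A `<=` sval B >]).
- by move=> A; apply/asboolP.
- move=> A B C /asboolP AB /asboolP BC.
  by apply/asboolP; exact: subset_trans BC.
- move=> [A pA] [B pB] /asboolP AB /asboolP BA.
  by apply: eq_exist; exact/seteqP.
- move=> C Ctot; have [[H0 CH0]|C0] := pselect (C !=set0); last first.
    exists (exist _ G0 (conj pG0 (@subset_refl _ G0))) => H CH.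
    by exfalso; apply: C0; exists H.
  pose U := \bigcup_(H in [set sval H | H in C]) H.
  have pU : ro_proper_filter U /\ G0 `<=` U.
    split; last first.
      by move=> p G0p; exists (sval H0); [exists H0|exact: (svalP H0).2].
    apply: ro_proper_filter_bigcup; first by exists (sval H0), H0.
      by move=> _ [H _ <-]; exact: (svalP H).1.
    move=> _ _ [A CA <-] [B CB <-].
    by have [/asboolP|/asboolP] := Ctot _ _ CA CB; [left|right].
  exists (exist _ U pU) => H CH; apply/asboolP => p Hp.
  by exists (sval H) => //; exists H.
exists (sval M); last exact: (svalP M).2.
split; first exact: (svalP M).1.
move=> H pH MH; have G0H : G0 `<=` H := subset_trans (svalP M).2 MH.
by have := Mmax (exist _ H (conj pH G0H)) (asboolT MH) => /(congr1 sval).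
Qed.

Section stone_space.
Context {X : topologicalType}.
Implicit Types (p q : set X) (G H : St X).

Lemma St_ultra G : ro_ultrafilter (sval G).
Proof. exact: svalP. Qed.

Lemma St_inj G H : sval G = sval H -> G = H.
Proof. by case: G H => [g ug] [h uh] /= gh; exact: eq_exist. Qed.

Lemma St_openE (A : set (St X)) : open A <->
  exists2 D', D' `<=` finI_from (@St_subbase X) id & \bigcup_(i in D') i = A.
Proof. by []. Qed.

Lemma Nq_open q : regular_open q -> open (Nq q).
Proof. by move=> rq; apply: (subbase_open St_openE); exists q. Qed.

Lemma Nq_nbhs G q : regular_open q -> Nq q G -> nbhs G (Nq q).
Proof. by move=> rq Gq; apply: open_nbhs_nbhs; split => //; exact: Nq_open. Qed.

Lemma NqI p q : regular_open p -> regular_open q ->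
  Nq (p `&` q) = Nq p `&` Nq q.
Proof.
by move=> rp rq; apply/seteqP; split=> G /(ro_ufIP (St_ultra G) rp rq).
Qed.

Lemma NqT : Nq setT = [set: St X].
Proof. by apply/seteqP; split=> // G _; exact: ro_ufT (St_ultra G). Qed.

Lemma St_nbhs G (B : set (St X)) : nbhs G B ->
  exists q, [/\ regular_open q, Nq q G & Nq q `<=` B].
Proof.
move=> GB; have [||_ [[q [rq ->]] Gq qB]] := nbhs_subbase St_openE _ _ GB.
- move=> H; exists (Nq setT); split; last exact: ro_ufT (St_ultra H).
  by exists setT; split => //; exact: regular_openT.
- move=> H _ _ [q1 [rq1 ->]] [q2 [rq2 ->]] H1 H2.
  exists (Nq (q1 `&` q2)); split; last by rewrite NqI.
    by exists (q1 `&` q2); split => //; exact: regular_openI.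
  by rewrite NqI.
by exists q.
Qed.

Lemma Nq_nonempty p : regular_open p -> p !=set0 -> Nq p !=set0.
Proof.
move=> rp [x px]; pose G0 := [set r | regular_open r /\ p `<=` r].
have pG0 : ro_proper_filter G0.
  split; first split.
  - by move=> r [].
  - by split => //; exact: regular_openT.
  - move=> r s [rr pr] [rs ps]; split; first exact: regular_openI.
    by move=> y py; split; [apply: pr|apply: ps].
  - by move=> r s [rr pr] rs sub; split => //; apply: subset_trans sub.
  - by move=> [_ /(_ x px)].
have [G uG G0G] := ro_ultrafilter_extend pG0.
by exists (exist _ G uG); apply: G0G; split.
Qed.

(* A filter on N_q is traced on RO(X) by the r with N_r in it; an ultrafilter
   extending this trace is a cluster point in N_q. *)
Lemma Nq_compact q : regular_open q -> compact (Nq q).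
Proof.
move=> rq Fl PF Fq; pose G0 := [set r | regular_open r /\ Fl (Nq r)].
have pG0 : ro_proper_filter G0.
  split; first split.
  - by move=> r [].
  - by split; [exact: regular_openT|rewrite NqT; exact: filterT].
  - move=> r s [rr Fr] [rs Fs]; split; first exact: regular_openI.
    by rewrite NqI //; exact: filterI.
  - move=> r s [rr Fr] rs sub; split => //; apply: filterS Fr.
    by move=> G Gr; exact: (ro_ufS (St_ultra G) Gr rs sub).
  - move=> [_ F0]; apply: (@filter_not_empty _ Fl); apply: filterS F0.
    by move=> G; exact: ro_uf_neq0 (St_ultra G).
have [G uG G0G] := ro_ultrafilter_extend pG0.
exists (exist _ G uG); split; first exact: G0G.
move=> A B FA /St_nbhs [r [rr Gr rB]]; apply: contrapT => nAB.
have AN : A `<=` Nq (ro_neg r).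
  move=> H HA; have [Hr|//] := ro_uf_neg (St_ultra H) rr.
  by exfalso; apply: nAB; exists H; split => //; apply: rB.
have /G0G : G0 (ro_neg r).
  by split; [exact/regular_open_neg/regular_open_open|exact: filterS FA].
exact: (ro_uf_negN uG Gr).
Qed.

End stone_space.

Section germs.
Context {X : topologicalType} (F : presheaf X).
Implicit Types (f g h : Sec F) (G H : St X) (U V W : set X).

Lemma agree_on_sub f g V : agree_on F f g V -> V `<=` sdom F f `&` sdom F g.
Proof. by case=> hf [hg _] x Vx; split; [apply: hf|apply: hg]. Qed.

Lemma agree_onS f g V W : Oset V -> Oset W -> W `<=` V ->
  agree_on F f g V -> agree_on F f g W.
Proof.
move=> OV OW WV [hf [hg fg]].
have hWf : W `<=` sdom F f by move=> x /WV /hf.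
have hWg : W `<=` sdom F g by move=> x /WV /hg.
exists hWf, hWg.
rewrite -(res_comp hf WV hWf _ (sdom_O F f) OV OW).
by rewrite -(res_comp hg WV hWg _ (sdom_O F g) OV OW) fg.
Qed.

Lemma agree_on_sym f g V : agree_on F f g V -> agree_on F g f V.
Proof. by case=> hf [hg fg]; exists hg, hf. Qed.

Lemma agree_on_trans f g h V :
  agree_on F f g V -> agree_on F g h V -> agree_on F f h V.
Proof.
case=> hf [hg fg] [hg' [hh gh]]; exists hf, hh; rewrite fg -gh.
by congr (res _ _); exact: Prop_irrelevance.
Qed.

Definition agree_set f g : set X :=
  [set x | exists V, [/\ Oset V, agree_on F f g V & V x]].

Lemma open_agree_set f g : open (agree_set f g).
Proof.
rewrite openE => x [V [[oV _] fgV Vx]].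
apply: filterS (open_nbhs_nbhs (conj oV Vx)) => y Vy.
by exists V; split => //; split => //; exists y.
Qed.

Lemma agree_set_sub f g : agree_set f g `<=` sdom F f `&` sdom F g.
Proof. by move=> x [V [_ /agree_on_sub fgV Vx]]; exact: fgV. Qed.

Lemma agree_setC f g : agree_set f g = agree_set g f.
Proof.
by apply/seteqP; split=> x [V [OV fgV Vx]]; exists V; split => //;
  exact: agree_on_sym.
Qed.

Lemma agree_set_trans f g h :
  agree_set f g `&` agree_set g h `<=` agree_set f h.
Proof.
move=> x [[V1 [OV1 fgV1 V1x]] [V2 [OV2 ghV2 V2x]]].
have O12 : Oset (V1 `&` V2) by split; [exact: openI OV1.1 OV2.1|exists x].
exists (V1 `&` V2); split => //; apply: (@agree_on_trans _ g).
  by apply: (agree_onS OV1 O12) fgV1 => y [].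
by apply: (agree_onS OV2 O12) ghV2 => y [].
Qed.

Lemma sdom_sub_agree_set f : sdom F f `<=` agree_set f f.
Proof.
move=> x fx; exists (sdom F f); split => //; first exact: sdom_O.
by exists (@subset_refl _ _), (@subset_refl _ _).
Qed.

(* Density of D_{f,g} below U says that U lies in the closure of the open set
   where f and g agree. *)
Lemma equivGE G f g : equivG F G f g <->
  [/\ Gbar G (sdom F f), Gbar G (sdom F g) & sval G (Reg (agree_set f g))].
Proof.
split=> [[Gf Gg [U [[[oU _] GU] _ dense]]]|[Gf Gg GA]]; split => //.
  apply: (ro_ufS (St_ultra G) GU); first exact: regular_open_Reg.
  apply: Reg_closureS => x Ux N; rewrite nbhsE => -[N' [oN' N'x] N'N].
  have OW : Oset (N' `&` U) by split; [exact: openI|exists x].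
  have [V [[oV [y Vy]] VW _ fgV]] := dense _ OW (fun z => @proj2 _ _).
  exists y; split; first by exists V; split => //; split => //; exists y.
  by apply: N'N; have [] := VW _ Vy.
have [z /interior_subset zA] := ro_uf_nonempty (St_ultra G) GA.
have [y [Ay _]] := zA setT filterT.
exists (agree_set f g); split; [|exact: agree_set_sub|].
  by split => //; split; [exact: open_agree_set|exists y].
move=> W [oW [x Wx]] WA; have [V [[oV V0] fgV Vx]] := WA _ Wx.
have OWV : Oset (W `&` V) by split; [exact: openI|exists x].
exists (W `&` V); split; [exact: OWV|exact: subIsetl| |].
  by move=> t [_ /(agree_on_sub fgV)].
by apply: (agree_onS (conj oV V0) OWV) fgV => t [].
Qed.

Lemma Gbar_sdom G f q : sval G q -> q `<=` Reg (sdom F f) -> Gbar G (sdom F f).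
Proof.
move=> Gq qf; split; first exact: sdom_O.
exact: (ro_ufS (St_ultra G) Gq (regular_open_Reg _) qf).
Qed.

Lemma equivG_refl G f : Gbar G (sdom F f) -> equivG F G f f.
Proof.
move=> Gf; apply/equivGE; split => //.
apply: (ro_ufS (St_ultra G) Gf.2); first exact: regular_open_Reg.
exact/RegS/sdom_sub_agree_set.
Qed.

Lemma equivG_sym G f g : equivG F G f g -> equivG F G g f.
Proof. by move/equivGE => [Gf Gg GA]; apply/equivGE; rewrite agree_setC. Qed.

Lemma equivG_trans G f g h :
  equivG F G f g -> equivG F G g h -> equivG F G f h.
Proof.
move/equivGE => [Gf _ Gfg] /equivGE [_ Gh Ggh]; apply/equivGE; split => //.
have GI : sval G (Reg (agree_set f g) `&` Reg (agree_set g h)).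
  by apply/(ro_ufIP (St_ultra G) (regular_open_Reg _) (regular_open_Reg _)).
apply: (ro_ufS (St_ultra G) GI); first exact: regular_open_Reg.
apply: subset_trans (RegI (open_agree_set _ _) (open_agree_set _ _)) _.
exact/RegS/agree_set_trans.
Qed.

Lemma equivG_germ G f g : equivG F G f g -> germ F G f = germ F G g.
Proof.
move=> fg; apply/seteqP; split => h /=.
  by move=> fh; apply: equivG_trans (equivG_sym fg) fh.
by move=> gh; apply: equivG_trans fg gh.
Qed.

Lemma germ_equivG G f g : Gbar G (sdom F g) ->
  germ F G f = germ F G g -> equivG F G f g.
Proof.
move=> Gg fg; have : germ F G g g by exact: equivG_refl.
by rewrite -fg.
Qed.

Lemma equivG_near G f g : equivG F G f g ->
  exists r, [/\ regular_open r, sval G r & forall H, sval H r ->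
    [/\ germ F H f = germ F H g, Gbar H (sdom F f) & Gbar H (sdom F g)]].
Proof.
move/equivGE => [Gf Gg GA].
have rfg := regular_openI (regular_open_Reg (sdom F f))
  (regular_open_Reg (sdom F g)).
exists (Reg (agree_set f g) `&` (Reg (sdom F f) `&` Reg (sdom F g))); split.
- exact: regular_openI (regular_open_Reg _) rfg.
- apply/(ro_ufIP (St_ultra G) (regular_open_Reg _) rfg); split => //.
  apply/(ro_ufIP (St_ultra G) (regular_open_Reg _) (regular_open_Reg _)).
  by split; [exact: Gf.2|exact: Gg.2].
move=> H /(ro_ufIP (St_ultra H) (regular_open_Reg _) rfg) [HA].
move=> /(ro_ufIP (St_ultra H) (regular_open_Reg _) (regular_open_Reg _)).
move=> [Hf Hg].
have [HGf HGg] : Gbar H (sdom F f) /\ Gbar H (sdom F g).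
  by split; split => //; exact: sdom_O.
by split => //; apply/equivG_germ/equivGE.
Qed.

Lemma not_equivG_near G f g : Gbar G (sdom F f) -> Gbar G (sdom F g) ->
  ~ equivG F G f g ->
  exists r, [/\ regular_open r, sval G r &
    forall H, sval H r -> ~ equivG F H f g].
Proof.
move=> Gf Gg nfg; have rA := regular_open_Reg (agree_set f g).
exists (ro_neg (Reg (agree_set f g))); split.
- exact/regular_open_neg/open_interior.
- have [GA|//] := ro_uf_neg (St_ultra G) rA.
  by exfalso; apply: nfg; apply/equivGE.
by move=> H Hn /equivGE [_ _ HA]; exact: (ro_uf_negN (St_ultra H) HA Hn).
Qed.

End germs.

Section germ_space.
Context {X : topologicalType} (F : presheaf X).
Implicit Types (f g : Sec F) (G H : St X) (e : Lambda F).

Definition germ_point G f (Gf : Gbar G (sdom F f)) : Lambda F :=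
  exist _ (G, germ F G f) (ex_intro _ f (conj Gf erefl)).

Definition is_germ_of e f :=
  Gbar (p1 F e) (sdom F f) /\ (sval e).2 = germ F (p1 F e) f.

Lemma Lambda_germ_of e : exists f, is_germ_of e f.
Proof. exact: svalP e. Qed.

Lemma Lambda_ext e1 e2 :
  p1 F e1 = p1 F e2 -> (sval e1).2 = (sval e2).2 -> e1 = e2.
Proof.
case: e1 e2 => [[G1 s1] P1] [[G2 s2] P2]; rewrite /p1 /= => G12 s12.
by apply: eq_exist; congr pair.
Qed.

Lemma Lambda_openE (A : set (Lambda F)) : open A <->
  exists2 D', D' `<=` finI_from (B1 F) id & \bigcup_(i in D') i = A.
Proof. by []. Qed.

Lemma B1_dot f q : regular_open q -> q `<=` Reg (sdom F f) ->
  B1 F (dot_image F f q).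
Proof. by move=> rq qf; exists f, q. Qed.

Lemma B1_open A : B1 F A -> open A.
Proof. exact: (subbase_open Lambda_openE). Qed.

Lemma B1_nbhs e A : B1 F A -> A e -> nbhs e A.
Proof. by move=> BA Ae; apply: open_nbhs_nbhs; split => //; exact: B1_open. Qed.

Lemma B1_germ_of e f q : is_germ_of e f -> regular_open q -> Nq q (p1 F e) ->
  B1 F (dot_image F f (q `&` Reg (sdom F f))) /\
  dot_image F f (q `&` Reg (sdom F f)) e.
Proof.
move=> [ef Ee] rq eq; have rf := regular_open_Reg (sdom F f); split.
  by apply: B1_dot; [exact: regular_openI|exact: subIsetr].
by split => //; apply/(ro_ufIP (St_ultra _) rq rf); split => //; exact: ef.2.
Qed.

Lemma B1_cover e : exists A, B1 F A /\ A e.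
Proof.
have [f ef] := Lambda_germ_of e.
have [BA Ae] := B1_germ_of ef regular_openT (ro_ufT (St_ultra _)).
by eexists; split; [exact: BA|exact: Ae].
Qed.

Lemma B1_refine e A1 A2 : B1 F A1 -> B1 F A2 -> A1 e -> A2 e ->
  exists A, [/\ B1 F A, A e & A `<=` A1 `&` A2].
Proof.
move=> [f1 [q1 [rq1 sq1 ->]]] [f2 [q2 [rq2 sq2 ->]]] [Gq1 e1] [Gq2 e2].
have f1f2 : equivG F (p1 F e) f1 f2.
  by apply: germ_equivG (Gbar_sdom Gq2 sq2) _; rewrite -e1 -e2.
have [r [rr Gr Hr]] := equivG_near f1f2.
have r2 := regular_openI rq2 rr.
have r12 := regular_openI rq1 r2.
exists (dot_image F f1 (q1 `&` (q2 `&` r))); split.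
- by apply: B1_dot r12 _ => x [/sq1].
- split => //; apply/(ro_ufIP (St_ultra _) rq1 r2); split => //.
  exact/(ro_ufIP (St_ultra _) rq2 rr).
move=> e' [/(ro_ufIP (St_ultra _) rq1 r2) [H1] + E'].
move=> /(ro_ufIP (St_ultra _) rq2 rr) [H2 H3].
by split; split => //; rewrite E'; have [] := Hr _ H3.
Qed.

Lemma Lambda_nbhs e (A : set (Lambda F)) : nbhs e A ->
  exists B, [/\ B1 F B, B e & B `<=` A].
Proof.
apply: (nbhs_subbase Lambda_openE B1_cover).
by move=> ? ? ? ? ? ? ?; exact: B1_refine.
Qed.

(* The paper's section f-dot is only defined on N_{Reg U_f}, so it is specified
   there rather than defined. *)
Definition dot_spec f (s : St X -> Lambda F) :=
  forall G, Nq (Reg (sdom F f)) G ->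
    p1 F (s G) = G /\ (sval (s G)).2 = germ F G f.

Lemma dot_exists f : exists s, dot_spec f s.
Proof.
have rf := regular_open_Reg (sdom F f).
have [G0 G0f] : Nq (Reg (sdom F f)) !=set0.
  have [oU [x Ux]] := sdom_O F f.
  by apply: Nq_nonempty => //; exists x; exact: open_subset_Reg.
exists (fun G => if pselect (Nq (Reg (sdom F f)) G) is left Gf
  then germ_point (Gbar_sdom Gf (@subset_refl _ _))
  else germ_point (Gbar_sdom G0f (@subset_refl _ _))).
by move=> G Gf; case: pselect.
Qed.

Lemma dot_continuous f s : dot_spec f s ->
  {within Nq (Reg (sdom F f)), continuous s}.
Proof.
have rf := regular_open_Reg (sdom F f).
move=> sf; rewrite continuous_open_subspace; last exact: Nq_open.
move=> G; rewrite inE => Gf B /= /Lambda_nbhs.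
move=> [A [[g [q [rq qg ->]]] [Gq Eg] AB]].
have [sG1 sG2] := sf _ Gf; rewrite sG1 in Gq Eg; rewrite sG2 in Eg.
have [r [rr Gr Hr]] := equivG_near (germ_equivG (Gbar_sdom Gq qg) Eg).
have rqf := regular_openI rq rf.
apply: filterS (Nq_nbhs (regular_openI rr rqf) _); last first.
  apply/(ro_ufIP (St_ultra G) rr rqf); split => //.
  exact/(ro_ufIP (St_ultra G) rq rf).
move=> H /(ro_ufIP (St_ultra H) rr rqf) [Hr'].
move=> /(ro_ufIP (St_ultra H) rq rf) [Hq Hf].
have [sH1 sH2] := sf _ Hf; apply: AB; split; first by rewrite sH1.
by rewrite sH1 sH2; have [] := Hr _ Hr'.
Qed.

Lemma dot_image_Nq f s q : dot_spec f s -> q `<=` Reg (sdom F f) ->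
  s @` Nq q = dot_image F f q.
Proof.
move=> sf qf.
have sub G : Nq q G -> Nq (Reg (sdom F f)) G.
  by move=> Gq; exact: (ro_ufS (St_ultra G) Gq (regular_open_Reg _) qf).
apply/seteqP; split.
  move=> _ [G Gq <-]; have [sG1 sG2] := sf _ (sub _ Gq).
  by split; [rewrite sG1|rewrite sG2 sG1].
move=> e [Gq Ee]; exists (p1 F e) => //.
have [sG1 sG2] := sf _ (sub _ Gq).
by apply: Lambda_ext => //; rewrite sG2 Ee.
Qed.

Lemma dot_image_compact f q : regular_open q -> q `<=` Reg (sdom F f) ->
  compact (dot_image F f q).
Proof.
move=> rq qf; have [s sf] := dot_exists f.
rewrite -(dot_image_Nq sf qf).
apply: continuous_compact; last exact: Nq_compact.
apply: continuous_subspaceW (dot_continuous sf).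
by move=> G Gq; exact: (ro_ufS (St_ultra G) Gq (regular_open_Reg _) qf).
Qed.

Lemma p1_continuous : continuous (p1 F).
Proof.
move=> e B /St_nbhs [q [rq eq qB]].
have [f ef] := Lambda_germ_of e.
have [BA Ae] := B1_germ_of ef rq eq.
apply: filterS (B1_nbhs BA Ae) => e' [].
by move=> /(ro_ufIP (St_ultra _) rq (regular_open_Reg _)) [/qB].
Qed.

Lemma B1_disjoint_nbhs e A : B1 F A -> ~ A e ->
  exists B, [/\ B1 F B, B e & B `<=` ~` A].
Proof.
move=> [f [q [rq qf ->]]] nAe; have [g eg] := Lambda_germ_of e.
have rg := regular_open_Reg (sdom F g).
have [Gq|Gnq] := ro_uf_neg (St_ultra (p1 F e)) rq.
  have nfg : ~ equivG F (p1 F e) f g.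
    by move=> fg; apply: nAe; split => //; rewrite eg.2 (equivG_germ fg).
  have [r [rr Gr Hr]] := not_equivG_near (Gbar_sdom Gq qf) eg.1 nfg.
  have [BB Be] := B1_germ_of eg rr Gr.
  exists (dot_image F g (r `&` Reg (sdom F g))); split => //.
  move=> e' [/(ro_ufIP (St_ultra _) rr rg) [H1 H2] E'] [_ AE].
  apply: (Hr _ H1); apply: germ_equivG; first exact: Gbar_sdom H2 _.
  by rewrite -AE E'.
have rnq := regular_open_neg (regular_open_open rq).
have [BB Be] := B1_germ_of eg rnq Gnq.
exists (dot_image F g (ro_neg q `&` Reg (sdom F g))); split => //.
move=> e' [/(ro_ufIP (St_ultra _) rnq rg) [Hn _] _] [Hq _].
exact: (ro_uf_negN (St_ultra _) Hq Hn).
Qed.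

Lemma B1_closed A : B1 F A -> closed A.
Proof.
move=> BA; rewrite -openC openE => e nAe.
have [B [BB Be BA']] := B1_disjoint_nbhs BA nAe.
exact: filterS BA' (B1_nbhs BB Be).
Qed.

Lemma B1_clopen A : B1 F A -> clopen A.
Proof. by move=> BA; split; [exact: B1_open|exact: B1_closed]. Qed.

Lemma B1_separates e1 e2 : e1 <> e2 -> exists A, [/\ B1 F A, A e1 & ~ A e2].
Proof.
move=> e12; have [f ef] := Lambda_germ_of e1.
have [E|nE] := pselect (p1 F e1 = p1 F e2).
  have [BA Ae1] := B1_germ_of ef regular_openT (ro_ufT (St_ultra _)).
  eexists; split; [exact: BA|exact: Ae1|move=> [_ E2]].
  by apply: e12; apply: Lambda_ext => //; rewrite E2 ef.2 E.
have [p [G1p nG2p]] :=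
  ro_uf_separate (St_ultra _) (St_ultra _) (fun E => nE (St_inj E)).
have rp := ro_uf_regular (St_ultra _) G1p.
have [BA Ae1] := B1_germ_of ef rp G1p.
eexists; split; [exact: BA|exact: Ae1|].
by move=> [/(ro_ufIP (St_ultra _) rp (regular_open_Reg _)) []].
Qed.

Lemma Lambda_zero_dimensional : zero_dimensional (Lambda F).
Proof.
move=> x y /eqP xy; have [A [BA Ax nAy]] := B1_separates xy.
by exists A; split => //; exact: B1_clopen.
Qed.

Lemma B1_is_base : is_base (B1 F).
Proof.
split=> [|O oO x Ox]; first exact: B1_open.
exact/Lambda_nbhs/open_nbhs_nbhs.
Qed.

Lemma B1_compact A : B1 F A -> compact A.
Proof. by move=> [f [q [rq qf ->]]]; exact: dot_image_compact. Qed.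

Lemma stalk_discrete G e : stalk F G e ->
  exists O : set (Lambda F), open O /\ O `&` stalk F G = [set e].
Proof.
move=> Ge; have [f ef] := Lambda_germ_of e.
have [BA Ae] := B1_germ_of ef regular_openT (ro_ufT (St_ultra _)).
exists (dot_image F f (setT `&` Reg (sdom F f))); split; first exact: B1_open.
apply/seteqP; split=> [e' [[_ E'] Ge']|_ ->] //=.
by apply: Lambda_ext; [rewrite Ge' Ge|rewrite E' ef.2 Ge' Ge].
Qed.

Lemma stalk_closed G : closed (stalk F G).
Proof.
rewrite -openC openE => e nGe; have [f ef] := Lambda_germ_of e.
have [p [Gep nGp]] := ro_uf_separate (St_ultra _) (St_ultra _)
  (fun E => nGe (St_inj E)).
have rp := ro_uf_regular (St_ultra _) Gep.
have [BA Ae] := B1_germ_of ef rp Gep.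
apply: filterS (B1_nbhs BA Ae) => e' [He' _] Ge'; apply: nGp; rewrite -Ge'.
by move: He' => /(ro_ufIP (St_ultra _) rp (regular_open_Reg _)) [].
Qed.

Lemma dot_local_section f : exists s : St X -> Lambda F,
  (forall G, Nq (Reg (sdom F f)) G ->
     p1 F (s G) = G /\ (proj1_sig (s G)).2 = germ F G f) /\
  local_section (p1 F) (Nq (Reg (sdom F f))) s.
Proof.
have [s sf] := dot_exists f; exists s; split => //; split.
- exact/Nq_open/regular_open_Reg.
- exact: dot_continuous.
- by move=> G /sf [].
Qed.

Lemma p1_etale : etale_space (p1 F).
Proof.
move=> e; have [f ef] := Lambda_germ_of e; have [s sf] := dot_exists f.
have rf := regular_open_Reg (sdom F f).
set A := dot_image F f (Reg (sdom F f)).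
have imA : p1 F @` A = Nq (Reg (sdom F f)).
  rewrite /A -(dot_image_Nq sf (@subset_refl _ _)); apply/seteqP; split.
    by move=> _ [_ [G Gf <-] <-]; have [-> _] := sf _ Gf.
  by move=> G Gf; exists (s G); [exists G|have [] := sf _ Gf].
exists A; split.
- exact/B1_open/B1_dot.
- by split; [exact: ef.1.2|exact: ef.2].
- by rewrite imA; exact: Nq_open.
split; first exact: continuous_subspaceT p1_continuous.
exists s; rewrite imA; split.
- move=> G Gf; have [sG1 sG2] := sf _ Gf.
  by split => //; split; [rewrite sG1|rewrite sG2 sG1].
- move=> e' [He' E']; have [sG1 sG2] := sf _ He'.
  by apply: Lambda_ext => //; rewrite sG2 E'.
- exact: dot_continuous.
Qed.

Lemma Lambda_not_compact : (exists G : St X, infinite_set (stalk F G)) ->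
  ~ compact [set: Lambda F].
Proof.
move=> [G infG] cpt; apply: infG.
exact: (compact_closed_discrete_finite cpt (@stalk_closed G)
  (@stalk_discrete G)).
Qed.

End germ_space.

Unset Implicit Arguments. Set Strict Implicit.

Theorem mainTheorem10 (X : topologicalType) (F : presheaf X) :
  (* (1) *)
  [/\ is_base (B1 F), (forall A, B1 F A -> compact A) &
      locally_compact [set: Lambda F]%classic] /\
  (* (2) *)
  (forall G : St X,
     (forall e, stalk F G e ->
        exists O : set (Lambda F), open O /\ O `&` stalk F G = [set e]) /\
     closed (stalk F G)) /\
  (* (3) *)
  [/\ continuous (p1 F),
      (forall f : Sec F, exists s : St X -> Lambda F,
         (forall G, Nq (Reg (sdom F f)) G ->
            p1 F (s G) = G /\ (proj1_sig (s G)).2 = germ F G f) /\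
         local_section (p1 F) (Nq (Reg (sdom F f))) s) &
      etale_space (p1 F)] /\
  (* (4) *)
  [/\ hausdorff_space (Lambda F), zero_dim (Lambda F) & tychonoff_space (Lambda F)] /\
  (* (5) *)
  ((exists G : St X, infinite_set (stalk F G)) -> ~ compact [set: Lambda F]%classic).
Proof.
have zdim : zero_dim (Lambda F).
  by exists (B1 F); split; [exact: B1_is_base|exact: B1_clopen].
have zd : zero_dimensional (Lambda F) by exact: Lambda_zero_dimensional.
split.
  split; [exact: B1_is_base|exact: B1_compact|].
  apply: (compact_base_locally_compact (B1_is_base F)) => A BA.
  by split; [exact: B1_compact|exact: B1_closed].
split; first by move=> G; split; [exact: stalk_discrete|exact: stalk_closed].
split.
  by split; [exact: p1_continuous|exact: dot_local_section|exact: p1_etale].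
split; last exact: Lambda_not_compact.
split; [exact: zero_dimensional_hausdorff|exact: zdim|].
exact: zero_dim_tychonoff (zero_dimensional_accessible zd) zdim.
Qed.
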